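(* Let $k\ge1$ and let $G\in\mathfrak A$ contain no subgraph isomorphic to $\Gamma_{k+1}$. If $H$ is a subgraph of $G$ isomorphic to $\Gamma_k$, then every vertex $q\in V(G)$ is an $H$-twin of some vertex of $H$.
   Context: $\mathfrak A$ is the class of maximal triangle-free graphs with at least two vertices containing no induced cycle of length six. (Maximal triangle-free: no triangle, and adding any new edge creates a triangle.) Andrásfai graph $\Gamma_k$: vertex set $\mathbb Z/(3k-1)\mathbb Z$, $ij$ an edge iff $i-j\in\{k,\dots,2k-1\}$ mod $3k-1$. For a subgraph $H$ of $G$, $q\in V(H)$, $q'\in V(G)$, $q'$ is an $H$-twin of $q$ if $\mathrm N(q)\cap V(H)=\mathrm N(q')\cap V(H)$ (neighbourhoods in $G$). *)

From mathcomp Require Import all_boot.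
Set Implicit Arguments. Unset Strict Implicit. Unset Printing Implicit Defensive.

Definition simple_graph (T : finType) (e : rel T) : Prop :=
  symmetric e /\ irreflexive e.

Definition triangle_free (T : finType) (e : rel T) : Prop :=
  forall x y z : T, ~ [&& e x y, e y z & e z x].

(* Maximal triangle-free: triangle-free and adding any non-edge xy (x <> y)
   creates a triangle, i.e. x and y have a common neighbour. *)
Definition maximal_triangle_free (T : finType) (e : rel T) : Prop :=
  triangle_free e /\
  forall x y : T, x != y -> ~~ e x y -> exists z, e x z && e z y.

Definition c6_adj (a b : 'I_6) : bool :=
  ((a + 1) %% 6 == b) || ((b + 1) %% 6 == a).

Definition has_induced_C6 (T : finType) (e : rel T) : Prop :=
  exists c : 'I_6 -> T, injective c /\ forall a b, e (c a) (c b) = c6_adj a b.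

Definition classA (T : finType) (e : rel T) : Prop :=
  [/\ simple_graph e, 2 <= #|T|, maximal_triangle_free e & ~ has_induced_C6 e].

Definition andrasfai_adj (k : nat) (i j : 'I_(3 * k - 1)) : bool :=
  let d := (i + (3 * k - 1) - j) %% (3 * k - 1) in (k <= d) && (d <= 2 * k - 1).

Definition andrasfai_embedding (k : nat) (T : finType) (e : rel T)
    (f : 'I_(3 * k - 1) -> T) : Prop :=
  injective f /\ forall i j : 'I_(3 * k - 1), @andrasfai_adj k i j -> e (f i) (f j).

Arguments andrasfai_embedding k {T} e f.

Definition has_andrasfai_subgraph (k : nat) (T : finType) (e : rel T) : Prop :=
  exists f : 'I_(3 * k - 1) -> T, andrasfai_embedding k e f.

Definition H_twin (T : finType) (e : rel T) (VH : {set T}) (q q' : T) : Prop :=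
  forall v, v \in VH -> e q v = e q' v.

From mathcomp Require Import all_boot zify.
Set Implicit Arguments. Unset Strict Implicit. Unset Printing Implicit Defensive.

(* Number the vertices of H cyclically modulo n = 3k - 1.  For a vertex x
   outside H with a neighbour in H, triangle-freeness together with induced
   six-cycles built from common neighbours (which exist by maximality) force
   N(x) inside H to be a cyclic interval of length l <= k.  If l = k it is the
   neighbourhood of the vertex of H opposite the interval, so x is its twin.
   If l = k - 1, then x and common neighbours of x with the two vertices of H
   flanking the interval extend H to a copy of Gamma_(k+1).  If 0 < l < k - 1,
   swapping the vertex before the interval for such a common neighbour yields a
   copy of Gamma_k in which the interval of x has length l + 1.  A vertex
   without neighbours in H is reduced to these cases by swapping a twin into H. *)

Lemma c6_adj_inj (a b : 'I_6) : (forall w, c6_adj a w = c6_adj b w) -> a = b.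
Proof.
move=> H; apply/val_inj.
have := H (inord 0); have := H (inord 1); have := H (inord 2);
have := H (inord 3); have := H (inord 4); have := H (inord 5).
rewrite /c6_adj !inordK //.
case: a b {H} => [[|[|[|[|[|[|//]]]]]] ?] [[|[|[|[|[|[|//]]]]]] ?]; vm_compute; congruence.
Qed.

Lemma modn_subDn (N i j : nat) : i < N -> j < N ->
  (i + N - j) %% N = if j <= i then i - j else i + N - j.
Proof.
move=> iN jN; case: leqP => H.
  have -> : i + N - j = (i - j) + N by lia.
  by rewrite modnDr modn_small //; lia.
by rewrite modn_small //; lia.
Qed.

Lemma modn_subDmod (N u t : nat) : t < N -> ((u + t) %% N + N - u %% N) %% N = t.
Proof.
move=> tN; have N0 : 0 < N by lia.
rewrite -modnDml; move: (ltn_pmod u N0); move: (u %% N) => r rN.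
case: (ltnP (r + t) N) => H.
  rewrite (modn_small H) (_ : r + t + N - r = t + N); last by lia.
  by rewrite modnDr modn_small.
rewrite (_ : r + t = r + t - N + N); last by lia.
rewrite modnDr (modn_small (m := r + t - N)); last by lia.
by rewrite (_ : r + t - N + N - r = t) ?modn_small //; lia.
Qed.

Lemma andrasfai_adj_sym k (i j : 'I_(3 * k - 1)) : andrasfai_adj i j = andrasfai_adj j i.
Proof.
have iN := ltn_ord i; have jN := ltn_ord j.
rewrite /andrasfai_adj (modn_subDn iN jN) (modn_subDn jN iN).
have [->//|/eqP ne] := eqVneq (val i) (val j).
by case: (leqP j i) => ?; case: (leqP i j) => ?;
  apply/idP/idP => /andP [? ?]; apply/andP; split; lia.
Qed.

Section Andrasfai.

Variables (k : nat) (T : finType) (e : rel T).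
Hypotheses (k_gt0 : 0 < k) (e_sym : symmetric e) (e_irr : irreflexive e).
Hypotheses (e_tfree : triangle_free e) (e_C6free : ~ has_induced_C6 e).
Hypothesis e_max : forall x y : T, x != y -> ~~ e x y -> exists z, e x z && e z y.
Hypothesis no_Gamma_k1 : ~ has_andrasfai_subgraph k.+1 e.

Lemma no_triangle a b c : e a b -> e b c -> e a c -> False.
Proof. by move=> ab bc ac; apply: (e_tfree (x:=a) (y:=b) (z:=c)); rewrite ab bc e_sym ac. Qed.

Lemma no_induced_C6 v0 v1 v2 v3 v4 v5 :
  e v0 v1 -> e v1 v2 -> e v2 v3 -> e v3 v4 -> e v4 v5 -> e v5 v0 ->
  ~~ e v0 v2 -> ~~ e v0 v3 -> ~~ e v0 v4 -> ~~ e v1 v3 -> ~~ e v1 v4 ->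
  ~~ e v1 v5 -> ~~ e v2 v4 -> ~~ e v2 v5 -> ~~ e v3 v5 -> False.
Proof.
move=> *; apply: e_C6free.
pose c (i : 'I_6) := nth v0 [:: v0; v1; v2; v3; v4; v5] i.
have adj a b : e (c a) (c b) = c6_adj a b.
  case: a b => [[|[|[|[|[|[|//]]]]]] ?] [[|[|[|[|[|[|//]]]]]] ?];
  rewrite /c /=; set b := c6_adj _ _; vm_compute in b; rewrite /b;
  first [ by rewrite e_irr | done | by rewrite e_sym | by apply/negbTE
        | by rewrite e_sym; apply/negbTE ].
exists c; split => // a b Hab; apply: c6_adj_inj => w.
by rewrite -!adj Hab.
Qed.

Local Notation n := (3 * k - 1).

Lemma n_gt0 : 0 < n. Proof. lia. Qed.

Definition ordm (x : nat) : 'I_n := Ordinal (ltn_pmod x n_gt0).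

Definition fmod (f : 'I_n -> T) x := f (ordm x).

Lemma ordmMD x c : ordm (x + c * n) = ordm x.
Proof. by apply/val_inj; rewrite /= addnC modnMDl. Qed.

Lemma fmodMD f x c : fmod f (x + c * n) = fmod f x.
Proof. by rewrite /fmod ordmMD. Qed.

Lemma ordm_ord (j : 'I_n) : ordm j = j.
Proof. by apply/val_inj; rewrite /= modn_small. Qed.

Lemma ordmD_eq u t : t < n -> (ordm (u + t) == ordm u) = (t == 0).
Proof.
move=> tn; apply/eqP/eqP => [/(congr1 val) /= /eqP|->]; last by rewrite addn0.
by rewrite -{2}[u]addn0 eqn_modDl mod0n modn_small // => /eqP.
Qed.

Lemma ordmD_onto u (j : 'I_n) : exists2 t, t < n & j = ordm (u + t).
Proof.
have := ltn_pmod u n_gt0; have := divn_eq u n; move: (u %% n) => r Eu rn.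
have jn := ltn_ord j.
exists (if r <= j then j - r else j + n - r); first by case: (leqP r j) => ?; lia.
apply/val_inj => /=; rewrite {1}Eu -addnA modnMDl.
case: (leqP r j) => ?; first by rewrite (_ : r + (j - r) = j) ?modn_small //; lia.
by rewrite (_ : r + (j + n - r) = j + n) ?modnDr ?modn_small //; lia.
Qed.

Lemma andrasfai_adj_ordm u t : t < n ->
  andrasfai_adj (ordm (u + t)) (ordm u) = (k <= t) && (t <= 2 * k - 1).
Proof. by move=> tn; rewrite /andrasfai_adj /= modn_subDmod. Qed.

Definition outside (f : 'I_n -> T) x := forall j, f j != x.

Definition replace_at (f : 'I_n -> T) i z j := if j == i then z else f j.

Lemma andrasfai_embedding_replace f i z : andrasfai_embedding k e f -> outside f z ->
  (forall j, andrasfai_adj i j -> e z (f j)) -> andrasfai_embedding k e (replace_at f i z).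
Proof.
rewrite /replace_at; case=> f_inj f_adj zo zi; split.
  move=> j j'; case: eqP => [->|_]; case: eqP => [->|_] // E.
  - by move: (zo j'); rewrite E eqxx.
  - by move: (zo j); rewrite E eqxx.
  - exact: f_inj.
move=> j j'; case: eqP => [->|_]; case: eqP => [->|_].
- by rewrite /andrasfai_adj addKn modnn => /andP [? _]; lia.
- exact: zi.
- by rewrite andrasfai_adj_sym e_sym => /zi.
- exact: f_adj.
Qed.

Lemma outside_replace f i x z : outside f x -> x != z -> outside (replace_at f i z) x.
Proof. by rewrite /replace_at => xo xz j; case: ifP => _; [rewrite eq_sym | apply: xo]. Qed.

Section Embedding.

Variable f : 'I_n -> T.
Hypothesis f_emb : andrasfai_embedding k e f.

Lemma fmod_adj u d : k <= d -> d <= 2 * k - 1 -> e (fmod f (u + d)) (fmod f u).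
Proof.
move=> d1 d2; case: f_emb => _; apply; rewrite andrasfai_adj_ordm; last by lia.
exact/andP.
Qed.

Lemma fmod_adj_mod u v d c1 c2 :
  k <= d -> d <= 2 * k - 1 -> v + c1 * n = u + d + c2 * n -> e (fmod f u) (fmod f v).
Proof. by move=> d1 d2 E; rewrite -(fmodMD f v c1) E fmodMD e_sym; apply: fmod_adj. Qed.

Lemma fmod_nonadj_mod u v d c1 c2 :
  1 <= d -> d <= k - 1 -> v + c1 * n = u + d + c2 * n -> ~~ e (fmod f u) (fmod f v).
Proof.
move=> d1 d2 E; rewrite -(fmodMD f v c1) E fmodMD; apply/negP => A.
have B : e (fmod f (u + d)) (fmod f (u + d + k)) by rewrite e_sym; apply: fmod_adj; lia.
have C : e (fmod f u) (fmod f (u + d + k)) by rewrite -addnA e_sym; apply: fmod_adj; lia.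
exact: (no_triangle A B C).
Qed.

Lemma fmodD_inj u o o' : o < n -> o' < n -> fmod f (u + o) = fmod f (u + o') -> o = o'.
Proof.
case: f_emb => f_inj _ on o'n /f_inj /(congr1 val) /= /eqP.
by rewrite eqn_modDl !modn_small // => /eqP.
Qed.

Definition nbhd_interval x a l := forall t, t < n -> e x (fmod f (a + t)) = (t < l).

Lemma nbhd_interval_in x a l t :
  nbhd_interval x a l -> t < l -> t < n -> e x (fmod f (a + t)).
Proof. by move=> I ? ?; rewrite I. Qed.

Lemma nbhd_interval_out x a l t :
  nbhd_interval x a l -> l <= t -> t < n -> ~~ e x (fmod f (a + t)).
Proof. by move=> I ? ?; rewrite I // -leqNgt. Qed.

Ltac clear_graph_facts := repeat match goal with
  | H : is_true (e _ _) |- _ => clear H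
  | H : is_true (~~ e _ _) |- _ => clear H
  | H : outside _ _ |- _ => clear H
  | H : nbhd_interval _ _ _ |- _ => clear H
  end.

(* Positions are naturals read modulo the non-constant [n], which [lia] cannot
   reason about: the tactics take the distance [d] and the multiples [c1], [c2]
   of [n] witnessing [v + c1 n = u + d + c2 n] explicitly. *)
Ltac adj d c1 c2 :=
  first [ (apply: (fmod_adj_mod (d:=d) (c1:=c1) (c2:=c2)); clear_graph_facts; lia)
        | (rewrite e_sym; apply: (fmod_adj_mod (d:=d) (c1:=c1) (c2:=c2));
           clear_graph_facts; lia) ].
Ltac nonadj d c1 c2 :=
  first [ (apply: (fmod_nonadj_mod (d:=d) (c1:=c1) (c2:=c2)); clear_graph_facts; lia)
        | (rewrite e_sym; apply: (fmod_nonadj_mod (d:=d) (c1:=c1) (c2:=c2));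
           clear_graph_facts; lia) ].

Lemma common_nbr_right x a l z : nbhd_interval x a l -> 0 < l -> l <= k - 1 ->
  e x z -> e z (fmod f (a + (k - 1))) ->
  forall o, k - 1 <= o -> o <= 2 * k - 2 -> e z (fmod f (a + o)).
Proof.
move=> I l1 l2 xz zj o o1 o2; have [-> //|/eqP ne] := eqVneq o (k - 1).
have {o1 o2 ne} [b -> bk] : exists2 b, o = k + b & b + 2 <= k by exists (o - k); lia.
apply/idPn => Hn.
have I0 : e x (fmod f a) by rewrite -[a]addn0; apply: (nbhd_interval_in I); lia.
have E34 : e (fmod f (a + (2 * k + b))) (fmod f (a + (k - 1))) by adj (k + 1 + b) 0 0.
apply: (no_induced_C6 (v0 := x) (v1 := fmod f a) (v2 := fmod f (a + (k + b)))
          (v3 := fmod f (a + (2 * k + b))) (v4 := fmod f (a + (k - 1))) (v5 := z)).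
- exact: I0.
- adj (k + b) 0 0.
- adj k 0 0.
- exact: E34.
- by rewrite e_sym.
- by rewrite e_sym.
- apply: (nbhd_interval_out I); lia.
- apply: (nbhd_interval_out I); lia.
- apply: (nbhd_interval_out I); lia.
- nonadj (k - 1 - b) 1 0.
- nonadj (k - 1) 0 0.
- by apply/negP => H; exact: no_triangle I0 H xz.
- nonadj (b + 1) 0 0.
- by rewrite e_sym.
- by apply/negP => H; apply: (no_triangle E34 _ H); rewrite e_sym.
Qed.

Lemma common_nbr_left x a z : nbhd_interval x a (k - 1) ->
  e x z -> e z (fmod f (a + (3 * k - 2))) ->
  forall o, 2 * k - 1 <= o -> o <= 3 * k - 2 -> e z (fmod f (a + o)).
Proof.
move=> I xz zj o o1 o2; have [-> //|/eqP ne] := eqVneq o (3 * k - 2).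
have {o1 o2 ne} [g -> gk] : exists2 g, o = 2 * k - 1 + g & g + 2 <= k.
  by exists (o - (2 * k - 1)); lia.
apply/idPn => Hn.
have I1 : e x (fmod f (a + (k - 2))) by apply: (nbhd_interval_in I); lia.
have E34 : e (fmod f (a + (k - 1 + g))) (fmod f (a + (3 * k - 2))).
  by adj (2 * k - 1 - g) 0 0.
apply: (no_induced_C6 (v0 := x) (v1 := fmod f (a + (k - 2)))
          (v2 := fmod f (a + (2 * k - 1 + g))) (v3 := fmod f (a + (k - 1 + g)))
          (v4 := fmod f (a + (3 * k - 2))) (v5 := z)).
- exact: I1.
- adj (k + 1 + g) 0 0.
- adj k 0 0.
- exact: E34.
- by rewrite e_sym.
- by rewrite e_sym.
- apply: (nbhd_interval_out I); lia.
- apply: (nbhd_interval_out I); lia.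
- apply: (nbhd_interval_out I); lia.
- nonadj (g + 1) 0 0.
- nonadj (k - 1) 1 0.
- by apply/negP => H; exact: no_triangle I1 H xz.
- nonadj (k - 1 - g) 0 0.
- by rewrite e_sym.
- by apply/negP => H; apply: (no_triangle E34 _ H); rewrite e_sym.
Qed.

Lemma common_nbr_outside_right x a l z : nbhd_interval x a l -> l <= k - 1 ->
  e x z -> e z (fmod f (a + (k - 1))) -> outside f z.
Proof.
move=> I lk xz zr j; apply/eqP => E; have [t tn jt] := ordmD_onto a j.
move: xz zr; rewrite -E jt -/(fmod f (a + t)) => xt.
have tl : t < l by rewrite -I.
apply/negP; nonadj (k - 1 - t) 0 0.
Qed.

Lemma common_nbr_outside_left x a l z : nbhd_interval x a l -> l <= k - 1 ->
  e x z -> e z (fmod f (a + (3 * k - 2))) -> outside f z.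
Proof.
move=> I lk xz zl j; apply/eqP => E; have [t tn jt] := ordmD_onto a j.
move: xz zl; rewrite -E jt -/(fmod f (a + t)) => xt.
have tl : t < l by rewrite -I.
apply/negP; nonadj (t + 1) 1 0.
Qed.

Section Gap.

Variables (x z : T) (a g m : nat).
Hypotheses (g_gt0 : 0 < g) (g_lt_m : g < m) (m_le : m <= k - 1).
Hypotheses (x0 : e x (fmod f a)) (xm : e x (fmod f (a + m))).
Hypotheses (xg : ~~ e x (fmod f (a + g))) (xz : e x z) (zg : e z (fmod f (a + g))).

Lemma gap_common_nbr_low : e z (fmod f (a + (k + g - 1))).
Proof.
apply/idPn => Hn.
have E12 : e (fmod f a) (fmod f (a + (k + g - 1))) by adj (k + g - 1) 0 0.
have E34 : e (fmod f (a + (2 * k + g - 1))) (fmod f (a + g)) by adj (2 * k - 1) 0 0.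
have Em3 : e (fmod f (a + m)) (fmod f (a + (2 * k + g - 1))).
  by adj (2 * k + g - 1 - m) 0 0.
apply: (no_induced_C6 (v0 := x) (v1 := fmod f a) (v2 := fmod f (a + (k + g - 1)))
          (v3 := fmod f (a + (2 * k + g - 1))) (v4 := fmod f (a + g)) (v5 := z)).
- exact: x0.
- exact: E12.
- adj k 0 0.
- exact: E34.
- by rewrite e_sym.
- by rewrite e_sym.
- by apply/negP => H; exact: no_triangle x0 E12 H.
- by apply/negP => H; exact: no_triangle xm Em3 H.
- exact: xg.
- nonadj (k - g) 1 0.
- nonadj g 0 0.
- by apply/negP => H; exact: no_triangle x0 H xz.
- nonadj (k - 1) 0 0.
- by rewrite e_sym.
- by apply/negP => H; apply: (no_triangle E34 _ H); rewrite e_sym.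
Qed.

Lemma gap_common_nbr_high : e z (fmod f (a + (2 * k + g))).
Proof.
apply/idPn => Hn.
have E12 : e (fmod f (a + m)) (fmod f (a + (2 * k + g))) by adj (2 * k + g - m) 0 0.
have E34 : e (fmod f (a + (k + g))) (fmod f (a + g)) by adj k 0 0.
have E03 : e (fmod f a) (fmod f (a + (k + g))) by adj (k + g) 0 0.
apply: (no_induced_C6 (v0 := x) (v1 := fmod f (a + m)) (v2 := fmod f (a + (2 * k + g)))
          (v3 := fmod f (a + (k + g))) (v4 := fmod f (a + g)) (v5 := z)).
- exact: xm.
- exact: E12.
- adj k 0 0.
- exact: E34.
- by rewrite e_sym.
- by rewrite e_sym.
- by apply/negP => H; exact: no_triangle xm E12 H.
- by apply/negP => H; exact: no_triangle x0 E03 H.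
- exact: xg.
- nonadj (k + g - m) 0 0.
- nonadj (m - g) 0 0.
- by apply/negP => H; exact: no_triangle xm H xz.
- nonadj (k - 1) 1 0.
- by rewrite e_sym.
- by apply/negP => H; apply: (no_triangle E34 _ H); rewrite e_sym.
Qed.

End Gap.

Lemma nbhd_window_convex x a g m : outside f x ->
  0 < g -> g < m -> m <= k - 1 -> e x (fmod f a) -> e x (fmod f (a + m)) ->
  e x (fmod f (a + g)).
Proof.
move=> xo g0 gm mk x0 xm; apply/idPn => xg.
have [z /andP [xz zg]] : exists z, e x z && e z (fmod f (a + g)).
  by apply: e_max => //; rewrite eq_sym; apply: xo.
have E : e (fmod f (a + (k + g - 1))) (fmod f (a + (2 * k + g))) by adj (k + 1) 0 0.
apply: (no_triangle _ E).
  exact: (gap_common_nbr_low g0 gm mk x0 xm xg xz zg).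
exact: (gap_common_nbr_high g0 gm mk x0 xm xg xz zg).
Qed.

Section Grow.

Variables (x z z' : T) (a : nat).

(* [Gamma_(k+1)] is [Gamma_k] with three vertices inserted at positions [0], [k+1]
   and [2k+2], each adjacent to exactly one of the three arcs between them; here
   they are [z'], [x], [z], and the arcs are [a+k-1..a+2k-2], [a+2k-1..a+3k-2]
   and [a..a+k-2] of H. *)
Definition grow_offset p :=
  if p <= k then p + k - 2 else if p <= 2 * k + 1 then p + k - 3 else p - 2 * k - 3.

Definition grow p :=
  if p == 0 then z' else if p == k.+1 then x else if p == 2 * k + 2 then z
  else fmod f (a + grow_offset p).

Lemma grow_offset_low p : p <= k -> grow_offset p = p + k - 2.
Proof. by rewrite /grow_offset => ->. Qed.

Lemma grow_offset_mid p : k < p -> p <= 2 * k + 1 -> grow_offset p = p + k - 3.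
Proof. by rewrite /grow_offset ltnNge => /negbTE -> ->. Qed.

Lemma grow_offset_high p : 2 * k + 1 < p -> grow_offset p = p - 2 * k - 3.
Proof. by move=> H; rewrite /grow_offset !ifN // -ltnNge //; lia. Qed.

Lemma grow_x : grow k.+1 = x.
Proof. by rewrite /grow eqxx. Qed.

Lemma grow_z : grow (2 * k + 2) = z.
Proof.
by rewrite /grow; case: eqP => [?|_]; first lia; case: eqP => [?|_]; [lia | rewrite eqxx].
Qed.

Lemma grow_H p : p != 0 -> p != k.+1 -> p != 2 * k + 2 -> grow p = fmod f (a + grow_offset p).
Proof. by move=> *; rewrite /grow !ifN. Qed.

Lemma grow_cases p : p < 3 * k + 2 ->
  [\/ p = 0 /\ grow p = z', p = k.+1 /\ grow p = x, p = 2 * k + 2 /\ grow p = z |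
      [/\ p != 0, p != k.+1, p != 2 * k + 2, grow p = fmod f (a + grow_offset p)
        & grow_offset p < n]].
Proof.
move=> pN.
have [->|/eqP p0] := eqVneq p 0; first exact: Or41.
have [->|/eqP p1] := eqVneq p k.+1; first by apply: Or42; rewrite grow_x.
have [->|/eqP p2] := eqVneq p (2 * k + 2); first by apply: Or43; rewrite grow_z.
apply: Or44; split; try exact/eqP; first by rewrite grow_H //; apply/eqP.
rewrite /grow_offset; case: (leqP p k) => ? /=; first lia.
by case: (leqP p (2 * k + 1)) => ? /=; lia.
Qed.

Lemma grow_inj : outside f x -> outside f z -> outside f z' ->
  x != z -> x != z' -> z != z' ->
  forall p p', p < 3 * k + 2 -> p' < 3 * k + 2 -> grow p = grow p' -> p = p'.
Proof.
move=> xo zo z'o xz xz' zz' p p' pN p'N E.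
case: (grow_cases pN) => [[Hp Gp]|[Hp Gp]|[Hp Gp]|[/eqP p0 /eqP p1 /eqP p2 Gp Op]];
case: (grow_cases p'N) => [[Hq Gq]|[Hq Gq]|[Hq Gq]|[/eqP q0 /eqP q1 /eqP q2 Gq Oq]];
rewrite Gp Gq /fmod in E; try by rewrite Hp Hq.
all: try by move: xz xz' zz'; rewrite E eqxx.
all: try by move: xz xz' zz'; rewrite -E eqxx.
all: try by move: (xo (ordm (a + grow_offset p'))) (zo (ordm (a + grow_offset p')))
        (z'o (ordm (a + grow_offset p'))); rewrite E eqxx.
all: try by move: (xo (ordm (a + grow_offset p))) (zo (ordm (a + grow_offset p)))
        (z'o (ordm (a + grow_offset p))); rewrite E eqxx.
have := fmodD_inj Op Oq E.
rewrite /grow_offset; case: (leqP p k) => ? /=; case: (leqP p (2 * k + 1)) => ? /=;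
  case: (leqP p' k) => ? /=; case: (leqP p' (2 * k + 1)) => ? /=; lia.
Qed.

Section GrowAdjacency.

Hypothesis I : nbhd_interval x a (k - 1).
Hypotheses (xz : e x z) (xz' : e x z').
Hypothesis z_arc : forall o, k - 1 <= o -> o <= 2 * k - 2 -> e z (fmod f (a + o)).
Hypothesis z'_arc : forall o, 2 * k - 1 <= o -> o <= 3 * k - 2 -> e z' (fmod f (a + o)).

Lemma grow_adj p p' : p' < p -> p < 3 * k + 2 -> k + 1 <= p - p' -> p - p' <= 2 * k + 1 ->
  e (grow p) (grow p').
Proof.
move=> lt pN d1 d2.
have p0 : p != 0 by apply/eqP; lia.
have [p'0|p'0] := eqVneq p' 0.
  subst p'; have [->|px] := eqVneq p k.+1; first by rewrite grow_x /grow eqxx.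
  have pz : p != 2 * k + 2 by apply/eqP; lia.
  rewrite grow_H // grow_offset_mid; [|lia|lia].
  by rewrite /grow eqxx e_sym; apply: z'_arc; lia.
have [p'x|p'x] := eqVneq p' k.+1.
  subst p'; have [->|pz] := eqVneq p (2 * k + 2); first by rewrite grow_z grow_x e_sym.
  have px : p != k.+1 by apply/eqP; lia.
  rewrite grow_x grow_H // grow_offset_high; last by lia.
  by rewrite e_sym; apply: (nbhd_interval_in I); lia.
have [p'z|p'z] := eqVneq p' (2 * k + 2); first lia.
rewrite (grow_H p'0 p'x p'z).
have px : p != k.+1 by apply/eqP; lia.
have [Hp'|Hp'] := leqP p' k.
  rewrite grow_offset_low //.
  have [pz|pz] := eqVneq p (2 * k + 2).
    by rewrite pz grow_z; apply: z_arc; lia.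
  rewrite grow_H //; have [Hp|Hp] := leqP p (2 * k + 1).
    rewrite grow_offset_mid //; last by lia.
    adj (p - p' - 1) 0 0.
  by rewrite grow_offset_high //; adj (p - p' - 2) 1 0.
have pz : p != 2 * k + 2 by apply/eqP; lia.
rewrite grow_offset_mid //; last by lia.
by rewrite grow_H // grow_offset_high; [adj (p - p' - 1) 1 0 | lia].
Qed.

Lemma grow_embedding : outside f x -> outside f z -> outside f z' ->
  x != z -> x != z' -> z != z' ->
  andrasfai_embedding k.+1 e (fun p : 'I_(3 * k.+1 - 1) => grow p).
Proof.
move=> xo zo z'o nxz nxz' nzz'; split.
  move=> p p' /(grow_inj xo zo z'o nxz nxz' nzz') E; apply/val_inj; apply: E.
    by have := ltn_ord p; lia.
  by have := ltn_ord p'; lia.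
move=> p p'; have pN := ltn_ord p; have p'N := ltn_ord p'.
rewrite /andrasfai_adj modn_subDn //.
case: (leqP p' p) => H /andP [d1 d2].
  have [E|/eqP ne] := eqVneq (val p) (val p'); first by rewrite E subnn in d1.
  apply: grow_adj; lia.
rewrite e_sym; apply: grow_adj; lia.
Qed.

End GrowAdjacency.

End Grow.

Lemma no_nbhd_interval_km1 x a : outside f x -> nbhd_interval x a (k - 1) -> False.
Proof.
move=> xo I.
have [z /andP [xz zr]] : exists z, e x z && e z (fmod f (a + (k - 1))).
  by apply: e_max; [rewrite eq_sym; apply: xo | apply: (nbhd_interval_out I); lia].
have [z' /andP [xz' zl]] : exists z, e x z && e z (fmod f (a + (3 * k - 2))).
  by apply: e_max; [rewrite eq_sym; apply: xo | apply: (nbhd_interval_out I); lia].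
have k_cases : 0 < k - 1 \/ k = 1 by lia.
have z_arc : forall o, k - 1 <= o -> o <= 2 * k - 2 -> e z (fmod f (a + o)).
  case: k_cases => [k2|k1]; first exact: common_nbr_right I k2 _ xz zr.
  by move=> o o1 o2; rewrite (_ : o = k - 1) //; lia.
have z'_arc := common_nbr_left I xz' zl.
have nxz : x != z by apply: contraTneq xz => ->; rewrite e_irr.
have nxz' : x != z' by apply: contraTneq xz' => ->; rewrite e_irr.
have nzz' : z != z'.
  apply: contraTneq zr => ->; apply/negP => z'r.
  have A : e (fmod f (a + (k - 1))) (fmod f (a + (2 * k - 1))) by adj k 0 0.
  by apply: (no_triangle z'r A); apply: z'_arc; lia.
apply: no_Gamma_k1; exists (fun p : 'I_(3 * k.+1 - 1) => grow x z z' a p).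
apply: (grow_embedding I xz xz' z_arc z'_arc) => //.
  exact: (common_nbr_outside_right I _ xz zr).
exact: (common_nbr_outside_left I _ xz' zl).
Qed.

Lemma nbhd_interval_twin x a : nbhd_interval x a k ->
  H_twin e [set f j | j in 'I_n] (fmod f (a + (2 * k - 1))) x.
Proof.
move=> I v /imsetP [j _ ->]; have [t tn ->] := ordmD_onto a j.
rewrite -/(fmod f (a + t)) I //; case: (ltnP t k) => H.
  adj (2 * k - 1 - t) 0 0.
apply/negbTE; case: (ltngtP t (2 * k - 1)) => H2.
- nonadj (2 * k - 1 - t) 0 0.
- nonadj (t - (2 * k - 1)) 0 0.
- by rewrite H2 e_irr.
Qed.

(* The first neighbour of [x] in the window of positions starting at [s + 2k]:
   neighbours at offsets beyond [2k - 2] there would be adjacent to [s]. *)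
Lemma nbhd_first_nbr x s : e x (fmod f s) ->
  exists2 a, e x (fmod f a) & forall t, t < n -> e x (fmod f (a + t)) -> t <= k - 1.
Proof.
move=> xs; pose b := s + 2 * k.
have b_near o : o < n -> e x (fmod f (b + o)) -> o <= 2 * k - 2.
  move=> on xbo; rewrite leqNgt; apply/negP => H.
  have A : e (fmod f s) (fmod f (b + o)) by rewrite /b; adj (o + 1 - k) 0 1.
  exact: no_triangle xs A xbo.
have b_nbr : exists o, (o < n) && e x (fmod f (b + o)).
  exists (k - 1); apply/andP; split; first lia.
  by rewrite (_ : b + (k - 1) = s + 1 * n) ?fmodMD //; rewrite /b; lia.
case: (ex_minnP b_nbr) => o0 /andP [o0n xo0] o0_min.
exists (b + o0) => // t tn xt.
case: (ltnP (o0 + t) n) => H.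
  have D : o0 + t <= 2 * k - 2 by apply: b_near => //; rewrite addnA.
  rewrite leqNgt; apply/negP => kt.
  have A : e (fmod f (b + o0)) (fmod f (b + o0 + t)) by adj t 0 0.
  exact: no_triangle xo0 A xt.
suff : o0 <= o0 + t - n by lia.
apply: o0_min; apply/andP; split; first lia.
by rewrite -(fmodMD f _ 1) (_ : b + (o0 + t - n) + 1 * n = b + o0 + t) //; lia.
Qed.

Lemma nbhd_interval_of_nbr x s : outside f x -> e x (fmod f s) ->
  exists a l, [/\ 0 < l, l <= k & nbhd_interval x a l].
Proof.
move=> xo xs; have [a xa a_first] := nbhd_first_nbr xs.
have a_k : (0 < k) && ~~ e x (fmod f (a + k)).
  rewrite k_gt0; apply/negP => xk.
  by have := a_first k (ltac:(lia)) xk; lia.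
have a_gap : exists t, (0 < t) && ~~ e x (fmod f (a + t)) by exists k.
case: (ex_minnP a_gap) => l /andP [l0 xl] l_min.
exists a, l; split => //; first exact: l_min.
move=> t tn; case: (ltnP t l) => H.
  have [->|/eqP t0] := eqVneq t 0; first by rewrite addn0.
  by apply/idPn => nt; have := l_min t; rewrite nt andbT; lia.
apply/negbTE; have [->//|/eqP ne] := eqVneq t l.
apply/negP => xt; have tk := a_first t tn xt.
have lt : l < t by lia.
by rewrite (nbhd_window_convex xo l0 lt tk xa xt) in xl.
Qed.

End Embedding.

Lemma nbhd_interval_replace f x z a l : nbhd_interval f x a.+1 l -> e x z ->
  nbhd_interval (replace_at f (ordm a) z) x a l.+1.
Proof.
move=> I xz t tn; rewrite /fmod /replace_at ordmD_eq //.
have [->|/eqP t0] := eqVneq t 0; first by rewrite xz.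
rewrite (_ : a + t = a.+1 + (t - 1)); last by lia.
by rewrite -/(fmod f (a.+1 + (t - 1))) I; lia.
Qed.

(* Position [a + (3k - 2)] is [a - 1]; it is taken over by a common neighbour of
   [x] and [a + k - 1], which by [common_nbr_right] sees all of its neighbours. *)
Lemma nbhd_interval_extend f x a l : andrasfai_embedding k e f -> outside f x ->
  nbhd_interval f x a l -> 0 < l -> l < k - 1 ->
  exists f', [/\ andrasfai_embedding k e f', outside f' x
               & nbhd_interval f' x (a + (3 * k - 2)) l.+1].
Proof.
move=> emb xo I l0 lk.
have [z /andP [xz zr]] : exists z, e x z && e z (fmod f (a + (k - 1))).
  by apply: e_max; [rewrite eq_sym; apply: xo | apply: (nbhd_interval_out I); lia].
have lk' : l <= k - 1 by lia.
have z_arc := common_nbr_right emb I l0 lk' xz zr.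
pose a' := a + (3 * k - 2).
have z_adj j : andrasfai_adj (ordm a') j -> e z (f j).
  have [t tn ->] := ordmD_onto a' j.
  rewrite andrasfai_adj_sym andrasfai_adj_ordm // => /andP [t1 t2].
  rewrite -/(fmod f (a' + t)) (_ : a' + t = a + (t - 1) + 1 * n); last by lia.
  by rewrite fmodMD; apply: z_arc; lia.
exists (replace_at f (ordm a') z); split.
- exact: andrasfai_embedding_replace emb (common_nbr_outside_right emb I lk' xz zr) z_adj.
- by apply: outside_replace xo _; apply: contraTneq xz => ->; rewrite e_irr.
- apply: nbhd_interval_replace xz => t tn.
  by rewrite -I // (_ : a'.+1 + t = a + t + 1 * n) ?fmodMD // /a'; lia.
Qed.

Lemma no_short_nbhd_interval f x a l : andrasfai_embedding k e f -> outside f x ->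
  nbhd_interval f x a l -> l < k -> (0 < l) || (k == 1) -> False.
Proof.
move=> emb xo I lk hl.
have [d Ed] : exists d, l + d = k - 1 by exists (k - 1 - l); lia.
elim: d f x a l Ed emb xo I {lk} hl => [|d IH] f x a l Ed emb xo I hl.
  by rewrite addn0 in Ed; rewrite Ed in I; exact: (no_nbhd_interval_km1 emb xo I).
have l0 : 0 < l by case/orP: hl => // /eqP k1; lia.
have [f' [emb' xo' I']] := nbhd_interval_extend emb xo I l0 (ltac:(lia)).
by apply: (IH f' x _ l.+1 _ emb' xo' I'); rewrite ?ltn0Sn //; lia.
Qed.

Lemma twin_of_outside_nbr f x s : andrasfai_embedding k e f -> outside f x ->
  e x (fmod f s) -> exists i, H_twin e [set f j | j in 'I_n] (f i) x.
Proof.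
move=> emb xo xs; have [a [l [l0 lk I]]] := nbhd_interval_of_nbr emb xo xs.
have [El|ne] := eqVneq l k.
  by rewrite El in I; exists (ordm (a + (2 * k - 1))); exact: (nbhd_interval_twin emb I).
by exfalso; apply: (no_short_nbhd_interval emb xo I); rewrite ?l0 //; lia.
Qed.

(* A vertex [q] without neighbours in H: a common neighbour [z] of [q] and H is a
   twin of some [f i] by the above, and swapping [z] for [f i] in H leaves [q]
   with a single neighbour in H. *)
Lemma outside_has_nbr f q : andrasfai_embedding k e f -> outside f q ->
  exists s, e q (fmod f s).
Proof.
move=> emb qo; case: (pickP (fun j => e q (f j))) => [j qj | no_nbr].
  by exists j; rewrite /fmod ordm_ord.
exfalso; have I0 a : nbhd_interval f q a 0 by move=> t _; rewrite /fmod no_nbr.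
have [k1|k2] := leqP k 1.
  by apply: (no_short_nbhd_interval emb qo (I0 0)) => //; apply/orP; right; lia.
have [z /andP [qz z0]] : exists z, e q z && e z (fmod f 0).
  by apply: e_max; [rewrite eq_sym; apply: qo | rewrite /fmod no_nbr].
have zo : outside f z by move=> j; apply: contraTneq qz => <-; rewrite no_nbr.
have [i zi] := twin_of_outside_nbr emb zo z0.
have z_adj j : andrasfai_adj (ordm i) j -> e z (f j).
  rewrite ordm_ord -zi; last exact: imset_f.
  by case: emb => _; apply.
have qz' : q != z by apply: contraTneq qz => ->; rewrite e_irr.
apply: (no_short_nbhd_interval (andrasfai_embedding_replace emb zo z_adj)
          (outside_replace _ qo qz') (nbhd_interval_replace (I0 i.+1) qz)) => //.
Qed.

Lemma exists_H_twin f q : andrasfai_embedding k e f ->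
  exists i, H_twin e [set f j | j in 'I_n] (f i) q.
Proof.
move=> emb; case: (pickP (fun j => f j == q)) => [j /eqP <- | not_in]; first by exists j.
have qo : outside f q by move=> j; rewrite not_in.
have [s qs] := outside_has_nbr emb qo.
exact: twin_of_outside_nbr emb qo qs.
Qed.

End Andrasfai.

Theorem lemma3p4 (k : nat) (T : finType) (e : rel T) :
  1 <= k ->
  classA e ->
  ~ has_andrasfai_subgraph k.+1 e ->
  forall f : 'I_(3 * k - 1) -> T,
    andrasfai_embedding k e f ->
    forall q : T, exists i : 'I_(3 * k - 1),
      H_twin e [set f j | j in 'I_(3 * k - 1)] (f i) q.
Proof.
move=> k_gt0 [[e_sym e_irr] _ [e_tfree e_max] e_C6free] no_Gamma_k1 f emb q.
exact: (exists_H_twin k_gt0 e_sym e_irr e_tfree e_C6free e_max no_Gamma_k1 q emb).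
Qed.
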